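(* For each integer $m\ge0$, both $\{G_j(x)^{q^m}\}_{j\ge0}$ and $\{D_j(x)^{q^m}\}_{j\ge0}$ are orthonormal bases of $C(O,K)$.
   Context: Let $q$ be a prime power, $K=\mathbf{F}_q((T))$, $O=\mathbf{F}_q[[T]]$ with $T$-adic absolute value. $C(O,K)$ is the $K$-Banach space of continuous functions $O\to K$ with sup-norm; a sequence $(f_n)$ is an orthonormal basis if every $f$ can be written uniquely as $f=\sum a_nf_n$ with $a_n\in K$, $a_n\to0$, and then $\|f\|=\max|a_n|$. For $n\ge1$: $[n]=T^{q^n}-T$, $F_0=1$, $F_n=[n][n-1]^q\cdots[1]^{q^{n-1}}$, $e_n(x)=\prod_{m\in\mathbf{F}_q[T],\deg m<n}(x-m)$; $E_0(x)=x$, $E_n=e_n/F_n$. Hasse derivatives: $\mathcal{D}_n(\sum_ia_iT^i)=\sum_i\binom{i}{n}a_iT^{i-n}$ (binomials in $\mathbf{F}_q$). For $j\ge0$ with base-$q$ expansion $j=\alpha_0+\cdots+\alpha_sq^s$ ($0\le\alpha_i<q$): $G_j=\prod_{n=0}^sE_n^{\alpha_n}$, $D_j=\prod_{n=0}^s\mathcal{D}_n^{\alpha_n}$ ($G_0=D_0=1$). *)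

From HB Require Import structures.
From mathcomp Require Import all_boot all_order all_algebra.
From mathcomp Require Import classical_sets reals.
From mathcomp Require Import Rstruct.
From Stdlib Require Import ClassicalEpsilon.

Set Implicit Arguments.
Unset Strict Implicit.
Unset Printing Implicit Defensive.

Import Order.TTheory GRing.Theory Num.Theory.
Local Open Scope ring_scope.
Notation R := Rdefinitions.R.

Section Laurent.
Variable F : finFieldType.

Definition qq : nat := #|F|.

(** Laurent series: coefficient functions Z -> F vanishing below some index. *)
Definition lbounded (f : int -> F) := exists N : int, forall n : int, n < N -> f n = 0.

Record K := MkK { kcoef : int -> F; kbnd : lbounded kcoef }.

Definition klb (x : K) : int :=
  proj1_sig (constructive_indefinite_description _ (kbnd x)).
Lemma klbP (x : K) n : n < klb x -> kcoef x n = 0.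
Proof. by rewrite /klb; case: constructive_indefinite_description => N HN /=; apply: HN. Qed.

Lemma kzero_bnd : lbounded (fun _ => 0). Proof. by exists 0. Qed.
Definition kzero : K := MkK kzero_bnd.

Definition kpoly_coef (p : {poly F}) (n : int) : F :=
  match n with Posz k => p`_k | Negz _ => 0 end.
Lemma kpoly_bnd p : lbounded (kpoly_coef p).
Proof. by exists 0; case. Qed.
Definition kpoly (p : {poly F}) : K := MkK (kpoly_bnd p).
Definition kone : K := kpoly 1.

Lemma kadd_bnd (x y : K) : lbounded (fun n => kcoef x n + kcoef y n).
Proof.
exists (Num.min (klb x) (klb y)) => n; rewrite lt_min => /andP[hx hy].
by rewrite !klbP // addr0.
Qed.
Definition kadd (x y : K) : K := MkK (kadd_bnd x y).

Lemma kopp_bnd (x : K) : lbounded (fun n => - kcoef x n).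
Proof. by exists (klb x) => n hn; rewrite klbP // oppr0. Qed.
Definition kopp (x : K) : K := MkK (kopp_bnd x).
Definition ksub (x y : K) : K := kadd x (kopp y).

(** Cauchy product: coefficient n is sum_{i = lx}^{n - ly} x_i y_{n-i} *)
Definition kmul_coef (x y : K) (n : int) : F :=
  let d := n - klb x - klb y in
  if d < 0 then 0 else
  \sum_(k < (absz d).+1) kcoef x (klb x + k%:Z) * kcoef y (n - klb x - k%:Z).
Lemma kmul_bnd x y : lbounded (kmul_coef x y).
Proof.
exists (klb x + klb y) => n hn; rewrite /kmul_coef ifT //.
by rewrite -addrA -opprD subr_lt0.
Qed.
Definition kmul (x y : K) : K := MkK (kmul_bnd x y).

Definition kexp (x : K) (k : nat) : K := iter k (kmul x) kone.
Definition kprod (s : seq K) : K := foldr kmul kone s.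
Definition ksum (s : seq K) : K := foldr kadd kzero s.

Definition kval (x : K) : option int :=
  match excluded_middle_informative
          (exists k : nat, kcoef x (klb x + k%:Z) != 0) with
  | left h => Some (klb x + (ex_minn h)%:Z)
  | right _ => None
  end.

(** inverse of a unit power series a_0 + a_1 T + ... (a_0 <> 0):
    b_0 = a_0^-1, b_k = - a_0^-1 * sum_{i=1}^k a_i b_{k-i} *)
Fixpoint invs (a : nat -> F) (k : nat) : seq F :=
  match k with
  | 0 => [:: (a 0%N)^-1]
  | k'.+1 => let s := invs a k' in
      rcons s (- (a 0%N)^-1 * \sum_(i < k'.+1) a i.+1 * nth 0 s (k' - i))
  end.
Definition invc (a : nat -> F) (k : nat) : F := nth 0 (invs a k) k.

(** x = T^v (a_0 + a_1 T + ...), x^-1 = T^-v (b_0 + b_1 T + ...);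
    the inverse of 0 is set to 0 *)
Definition kinv_coef (x : K) (n : int) : F :=
  match kval x with
  | Some v => if n + v is Posz k then invc (fun i => kcoef x (v + i%:Z)) k else 0
  | None => 0
  end.
Lemma kinv_bnd x : lbounded (kinv_coef x).
Proof.
rewrite /kinv_coef; case: (kval x) => [v|]; last by exists 0.
exists (- v) => n hn; case E: (n + v) => [k|//].
by move: hn; rewrite -subr_lt0 opprK E.
Qed.
Definition kinv (x : K) : K := MkK (kinv_bnd x).
Definition kdiv (x y : K) : K := kmul x (kinv y).

Definition absK (x : K) : R :=
  match kval x with Some v => (qq%:R : R) ^ (- v) | None => 0 end.

(** O = F_q[[T]] as the elements of K with no negative coefficients *)
Record O := MkO { oval : K; oint : forall n : int, n < 0 -> kcoef oval n = 0 }.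

Definition kcontinuous (f : O -> K) : Prop :=
  forall (x : O) (e : R), 0 < e -> exists2 d : R, 0 < d &
    forall y : O, absK (ksub (oval y) (oval x)) < d -> absK (ksub (f y) (f x)) < e.

Definition supnorm (f : O -> K) : R := sup [set absK (f x) | x in [set: O]].

Definition kcvg0 (a : nat -> K) : Prop :=
  forall e : R, 0 < e -> exists N : nat, forall n, (N <= n)%N -> absK (a n) < e.

Definition psum (b : nat -> O -> K) (a : nat -> K) (N : nat) : O -> K :=
  fun x => ksum [seq kmul (a n) (b n x) | n <- iota 0 N].

Definition expansion (b : nat -> O -> K) (f : O -> K) (a : nat -> K) : Prop :=
  kcvg0 a /\
  forall e : R, 0 < e -> exists N0 : nat, forall N, (N0 <= N)%N ->
    supnorm (fun x => ksub (f x) (psum b a N x)) < e.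

Definition orthonormal_basis (b : nat -> O -> K) : Prop :=
  (forall n, kcontinuous (b n)) /\
  forall f : O -> K, kcontinuous f ->
    (exists a, expansion b f a) /\
    (forall a a', expansion b f a -> expansion b f a' -> a = a') /\
    (forall a, expansion b f a ->
       (exists n, supnorm f = absK (a n)) /\ (forall n, absK (a n) <= supnorm f)).

Definition bracket (n : nat) : {poly F} := 'X^(qq ^ n) - 'X.
Definition Fpol (n : nat) : {poly F} :=
  \prod_(1 <= i < n.+1) bracket i ^+ (qq ^ (n - i)).

(** e_n(x) = prod_{m in F[T], deg m < n} (x - m); the polynomials of degree
    < n are exactly Poly t for t an n-tuple of coefficients *)
Definition e_n (n : nat) (x : K) : K :=
  kprod [seq ksub x (kpoly (Poly (tval t))) | t <- enum {: n.-tuple F}].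

Definition E_n (n : nat) (x : K) : K :=
  if n is 0%N then x else kdiv (e_n n x) (kpoly (Fpol n)).

Definition hasse_coef (n : nat) (x : K) (k : int) : F :=
  match k + n%:Z with Posz i => ('C(i, n))%:R * kcoef x (k + n%:Z) | Negz _ => 0 end.
Lemma hasse_bnd n x : lbounded (hasse_coef n x).
Proof.
exists (klb x - n%:Z) => k hk; rewrite /hasse_coef.
have h : k + n%:Z < klb x by rewrite -ltrBrDr.
by case: (k + n%:Z) h => // i h; rewrite klbP ?mulr0.
Qed.
Definition hasse (n : nat) (x : K) : K := MkK (hasse_bnd n x).

Definition digit (j i : nat) : nat := (j %/ qq ^ i) %% qq.
Definition top_digit (j : nat) : nat := trunc_log qq j.

Definition G (j : nat) (x : O) : K :=
  kprod [seq kexp (E_n n (oval x)) (digit j n) | n <- iota 0 (top_digit j).+1].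
Definition D (j : nat) (x : O) : K :=
  kprod [seq kexp (hasse n (oval x)) (digit j n) | n <- iota 0 (top_digit j).+1].

End Laurent.

(* Both families have the form [b_j = (prod_n phi_n ^+ a_n) ^+ q ^ m], with [a_n] the base-q
   digits of [j] and [phi_n = E_n] or [D_n] a continuous map O -> O whose reduction modulo T
   is the n-th T-adic digit [x_n] of [x].  As [y ^+ q = y] on F_q, [b_j] reduces to the
   monomial [prod_n x_n ^+ a_n], and such monomials with exponents < q form a basis of the
   F_q-valued functions of finitely many digits.  This is enough: a continuous f is uniformly
   continuous on the compact O, so each T-adic coefficient of f (or of a remainder) depends
   on finitely many digits of x and is matched by a finite combination of the b_j;
   successive approximation yields the expansion, and the linear independence of the
   reductions gives uniqueness and ||f|| = max |a_j|.  For E_n, the factors x - m with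
   deg m < n have total valuation 1 + q + ... + q^(n-1), that of F_n, and the product of
   their leading coefficients is x_n times the leading coefficient of F_n, by Wilson's
   theorem in F_q. *)

From mathcomp Require Import all_boot all_order all_algebra.
From mathcomp Require Import boolp classical_sets reals Rstruct.
From mathcomp Require Import finfield zify ring.
Unset Printing Implicit Defensive.
Import Order.TTheory GRing.Theory Num.Theory.
Local Open Scope ring_scope.

Lemma exists_ltz_addn (n L : int) : exists N : nat, n < L + N%:Z.
Proof.
exists `|n - L|.+1%N; case: (lerP 0 (n - L)) => h; last by lia.
by have := gez0_abs h; lia.
Qed.

Section Coefficients.
Context {F : finFieldType}.
Local Notation K := (K F).
Implicit Types (x y z : K) (l L : int).

Definition vanish_lt x l := forall n, n < l -> kcoef x n = 0.
Definition eqmodT x y l := forall n, n < l -> kcoef x n = kcoef y n.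

Lemma kcoef_inj x y : (forall n, kcoef x n = kcoef y n) -> x = y.
Proof.
case: x => cx bx; case: y => cy by0 /= h.
have e : cx = cy by apply: funext.
by subst; f_equal; apply: Prop_irrelevance.
Qed.

Lemma vanish_ltW x l l' : l' <= l -> vanish_lt x l -> vanish_lt x l'.
Proof. by move=> h hx n hn; apply: hx; apply: lt_le_trans hn h. Qed.

Lemma eqmodTW x y l l' : l' <= l -> eqmodT x y l -> eqmodT x y l'.
Proof. by move=> h hx n hn; apply: hx; apply: lt_le_trans hn h. Qed.

Lemma eqmodT_refl x l : eqmodT x x l. Proof. by []. Qed.

Lemma eqmodT_sym {x y l} : eqmodT x y l -> eqmodT y x l.
Proof. by move=> h n hn; rewrite h. Qed.

Lemma eqmodT_trans {x y z l} : eqmodT x y l -> eqmodT y z l -> eqmodT x z l.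
Proof. by move=> h1 h2 n hn; rewrite h1 ?h2. Qed.

Lemma vanish_lt_klb x : vanish_lt x (klb x).
Proof. by move=> n; apply: klbP. Qed.

Lemma vanish_lt_max {x l1 l2} : vanish_lt x l1 -> vanish_lt x l2 -> vanish_lt x (Num.max l1 l2).
Proof. by move=> h1 h2 n; rewrite /Num.max; case: ifP => _; [exact: h2 | exact: h1]. Qed.

Lemma kaddE x y n : kcoef (kadd x y) n = kcoef x n + kcoef y n. Proof. by []. Qed.
Lemma ksubE x y n : kcoef (ksub x y) n = kcoef x n - kcoef y n. Proof. by []. Qed.
Lemma kzeroE n : kcoef (@kzero F) n = 0. Proof. by []. Qed.

Lemma eqmodT_sub x y l : eqmodT x y l <-> vanish_lt (ksub x y) l.
Proof.
split => h n hn; first by rewrite ksubE h // subrr.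
by apply/eqP; rewrite -subr_eq0 -ksubE h.
Qed.

Lemma kpolyE (p : {poly F}) (k : nat) : kcoef (kpoly p) k%:Z = p`_k.
Proof. by []. Qed.

Lemma kpoly_vanish (p : {poly F}) : vanish_lt (kpoly p) 0.
Proof. by case. Qed.

Lemma koneE n : kcoef (kone F) n = (n == 0)%:R.
Proof. by case: n => [k|k] //=; rewrite coefC; case: k. Qed.

(* [kmul] convolves from the chosen bounds [klb]; [conv_sum] allows any lower bound [L] of
   the support of [x] and any window [L, L + N) that is long enough. *)
Definition conv_sum x y n L (N : nat) :=
  \sum_(k < N) kcoef x (L + k%:Z) * kcoef y (n - L - k%:Z).

Lemma conv_sum_widen x {y n L N N' Ly} : vanish_lt y Ly -> n - Ly < L + N%:Z ->
  (N <= N')%N -> conv_sum x y n L N' = conv_sum x y n L N.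
Proof.
move=> hy hc hN; rewrite /conv_sum -(subnKC hN) big_split_ord /=.
by rewrite [X in _ + X]big1 ?addr0 // => i _; rewrite hy ?mulr0 //; lia.
Qed.

Lemma conv_sum_shift x y n L N (j : nat) :
  (forall i : nat, (i < j)%N -> kcoef x (L - i.+1%:Z) = 0) ->
  conv_sum x y n (L - j%:Z) (N + j) = conv_sum x y n L N.
Proof.
elim: j => [|j IH] h; first by rewrite subr0 addn0.
rewrite addnS -IH; last by move=> i hi; apply: h; lia.
rewrite /conv_sum big_ord_recl /=.
have -> : L - j.+1%:Z + 0%N%:Z = L - j.+1%:Z by lia.
rewrite h // mul0r add0r; apply: eq_bigr => i _.
have -> : L - j.+1%:Z + (bump 0 i)%:Z = L - j%:Z + i%:Z by rewrite /bump /=; lia.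
by have -> : n - (L - j.+1%:Z) - (bump 0 i)%:Z = n - (L - j%:Z) - i%:Z by rewrite /bump /=; lia.
Qed.

Lemma conv_sum_eq {x y n L1 L2 N1 N2 Ly} :
  vanish_lt x L1 -> vanish_lt x L2 -> vanish_lt y Ly ->
  n - Ly < L1 + N1%:Z -> n - Ly < L2 + N2%:Z ->
  conv_sum x y n L1 N1 = conv_sum x y n L2 N2.
Proof.
move=> hx1 hx2 hy.
wlog le12 : L1 L2 N1 N2 hx1 hx2 / L1 <= L2.
  move=> W h1 h2; case: (lerP L1 L2) => h; first exact: W.
  by symmetry; apply: W => //; apply: ltW.
move=> h1 h2.
have [j hj] : exists j : nat, L2 - L1 = j%:Z.
  by exists `|L2 - L1|%N; rewrite gez0_abs // subr_ge0.
have -> : L1 = L2 - j%:Z by lia.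
rewrite -(@conv_sum_shift x y n L2 N2 j); last by move=> i hi; apply: hx2; lia.
have hw : n - Ly < L2 - j%:Z + (N2 + j)%:Z by lia.
have h1' : n - Ly < L2 - j%:Z + N1%:Z by lia.
case: (leqP N1 (N2 + j)) => hN.
  by rewrite (conv_sum_widen x hy h1' hN).
by rewrite (conv_sum_widen x hy hw (ltnW hN)).
Qed.

Lemma kmul_coefE {x y Lx Ly n N} : vanish_lt x Lx -> vanish_lt y Ly ->
  n - Ly < Lx + N%:Z -> kcoef (kmul x y) n = conv_sum x y n Lx N.
Proof.
move=> hx hy hc; rewrite /= /kmul_coef.
set d := n - klb x - klb y.
have hy' := vanish_lt_max hy (vanish_lt_klb y).
have hm1 : Ly <= Num.max Ly (klb y) by rewrite le_max lexx.
have hm2 : klb y <= Num.max Ly (klb y) by rewrite le_max lexx orbT.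
case: ifP => hd.
  have -> : 0 = conv_sum x y n (klb x) 0 by rewrite /conv_sum big_ord0.
  by apply: (conv_sum_eq (vanish_lt_klb x) hx hy'); lia.
have hd' : `|d|%N%:Z = d by rewrite gez0_abs // leNgt hd.
change (conv_sum x y n (klb x) `|d|.+1 = conv_sum x y n Lx N).
by apply: (conv_sum_eq (vanish_lt_klb x) hx hy'); lia.
Qed.

End Coefficients.

Section Products.
Context {F : finFieldType}.
Local Notation K := (K F).
Implicit Types (x y : K).

Lemma kmul_vanish {x y Lx Ly} : vanish_lt x Lx -> vanish_lt y Ly ->
  vanish_lt (kmul x y) (Lx + Ly).
Proof.
move=> hx hy n hn; rewrite (kmul_coefE (N := 0) hx hy); last by lia.
by rewrite /conv_sum big_ord0.
Qed.

Lemma kmul_coef_lead {x y Lx Ly} : vanish_lt x Lx -> vanish_lt y Ly ->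
  kcoef (kmul x y) (Lx + Ly) = kcoef x Lx * kcoef y Ly.
Proof.
move=> hx hy; rewrite (kmul_coefE (N := 1) hx hy); last by lia.
rewrite /conv_sum big_ord1 /= addr0; congr (_ * _); congr (kcoef y _); lia.
Qed.

Lemma kmul_eqmodT {x x' y y' Lx Ly A B} :
  vanish_lt x Lx -> vanish_lt x' Lx -> vanish_lt y Ly -> vanish_lt y' Ly ->
  eqmodT x x' A -> eqmodT y y' B -> eqmodT (kmul x y) (kmul x' y') (Num.min (A + Ly) (B + Lx)).
Proof.
move=> hx hx' hy hy' ha hb n; rewrite lt_min => /andP[h1 h2].
have [N hN] := exists_ltz_addn (n - Ly) Lx.
rewrite (kmul_coefE hx hy hN) (kmul_coefE hx' hy' hN).
apply: eq_bigr => k _; case: (ltrP (Lx + k%:Z) A) => hk.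
  by rewrite ha // hb //; lia.
by rewrite hy ?hy' ?mulr0 //; lia.
Qed.

Lemma kmulDl_coef {x1 x2 x3 y L Ly} n :
  vanish_lt x1 L -> vanish_lt x2 L -> vanish_lt x3 L -> vanish_lt y Ly ->
  (forall i, kcoef x3 i = kcoef x1 i + kcoef x2 i) ->
  kcoef (kmul x3 y) n = kcoef (kmul x1 y) n + kcoef (kmul x2 y) n.
Proof.
move=> h1 h2 h3 hy he; have [N hN] := exists_ltz_addn (n - Ly) L.
rewrite (kmul_coefE h1 hy hN) (kmul_coefE h2 hy hN) (kmul_coefE h3 hy hN) /conv_sum -big_split /=.
by apply: eq_bigr => k _; rewrite he mulrDl.
Qed.

Lemma kmul0l_coef x y : (forall i, kcoef x i = 0) -> forall n, kcoef (kmul x y) n = 0.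
Proof.
move=> hx n; have hx' : vanish_lt x (n + 1 - klb y) by move=> i _; apply: hx.
by apply: (kmul_vanish hx' (vanish_lt_klb y)); lia.
Qed.

Lemma ksumE (s : seq K) n : kcoef (ksum s) n = \sum_(z <- s) kcoef z n.
Proof. by elim: s => [|z s IH]; rewrite ?big_nil ?big_cons // -IH. Qed.

Lemma kone_integral : vanish_lt (kone F) 0.
Proof. by move=> n hn; rewrite koneE (negbTE (ltr0_neq0 hn)). Qed.

Lemma kprod_lead {T : Type} {f : T -> K} {u : T -> int} (r : seq T) :
  (forall i, vanish_lt (f i) (u i)) ->
  vanish_lt (kprod (map f r)) (\sum_(i <- r) u i) /\
  kcoef (kprod (map f r)) (\sum_(i <- r) u i) = \prod_(i <- r) kcoef (f i) (u i).
Proof.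
move=> h; elim: r => [|z s [IH1 IH2]].
  by rewrite !big_nil koneE; split; [exact: kone_integral|].
rewrite !big_cons; split; first exact: kmul_vanish.
by rewrite [kprod _]/= kmul_coef_lead // IH2.
Qed.

Lemma kprod_integral {T : Type} {f : T -> K} (r : seq T) : (forall i, vanish_lt (f i) 0) ->
  vanish_lt (kprod (map f r)) 0 /\
  kcoef (kprod (map f r)) 0 = \prod_(i <- r) kcoef (f i) 0.
Proof. by move=> h; have := kprod_lead (u := fun _ => 0) r h; rewrite big1_eq. Qed.

Lemma kexp_integral {y} k : vanish_lt y 0 ->
  vanish_lt (kexp y k) 0 /\ kcoef (kexp y k) 0 = kcoef y 0 ^+ k.
Proof.
move=> hy; elim: k => [|k [IH1 IH2]]; first by rewrite koneE; split; [exact: kone_integral|].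
have := kmul_coef_lead hy IH1; have := kmul_vanish hy IH1; rewrite addr0 => h1 h2.
by split; rewrite [kexp _ _]/= ?h2 ?exprS ?IH2.
Qed.

End Products.

Lemma qq_gt1 (F : finFieldType) : (1 < qq F)%N.
Proof. by apply/card_gt1P; exists 0, 1; rewrite !inE eq_sym oner_neq0. Qed.

Lemma qR_gt1 (F : finFieldType) : 1 < (qq F)%:R :> R.
Proof. by rewrite ltr1n qq_gt1. Qed.

Lemma qpow_gt0 (F : finFieldType) (l : int) : 0 < (qq F)%:R ^ l :> R.
Proof. exact/exprz_gt0/(lt_trans ltr01 (qR_gt1 F)). Qed.

Lemma qpow_small (F : finFieldType) (e : R) : 0 < e ->
  exists l : nat, (qq F)%:R ^ (- l%:Z) < e.
Proof.
move=> he; set n := Num.bound e^-1; exists n.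
have := @archi_boundP _ e^-1; rewrite invr_ge0 ltW // -/n => /(_ isT) hn.
rewrite -invr_expz -[e]invrK ltf_pV2 ?posrE ?invr_gt0 ?qpow_gt0 //.
apply: lt_trans hn _; rewrite -exprnP -natrX ltr_nat; exact: ltn_expl (qq_gt1 F).
Qed.

Section AbsoluteValue.
Context {F : finFieldType}.
Local Notation K := (K F).
Local Notation qR := ((qq F)%:R : R).
Implicit Types (x : K) (l : int).

Lemma kvalP x : match kval x with
  | Some v => vanish_lt x v /\ kcoef x v != 0
  | None => forall n, kcoef x n = 0 end.
Proof.
rewrite /kval; case: ClassicalEpsilon.excluded_middle_informative => [h|h].
  case: ex_minnP => m hm hmin; split => // n hn.
  case: (ltrP n (klb x)) => h1; first exact: vanish_lt_klb.
  have [k hk] : exists k : nat, n = klb x + k%:Z.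
    by exists `|n - klb x|%N; rewrite gez0_abs ?subr_ge0 //; lia.
  subst n; apply/eqP; apply: contraT => /hmin; lia.
move=> n; case: (ltrP n (klb x)) => h1; first exact: vanish_lt_klb.
apply/eqP; apply: contraT => hk2; case: h.
by exists `|n - klb x|%N; rewrite gez0_abs ?subr_ge0 // addrCA subrr addr0.
Qed.

Lemma kval_eq {x v} : vanish_lt x v -> kcoef x v != 0 -> kval x = Some v.
Proof.
move=> hv hn; have := kvalP x; case: kval => [w [hw hnw]|h0]; last by rewrite h0 eqxx in hn.
have hvw : ~ (v < w) by move=> h; move: hn; rewrite hw ?eqxx.
have hwv : ~ (w < v) by move=> h; move: hnw; rewrite hv ?eqxx.
congr Some; lia.
Qed.

Lemma absK_ge0 x : 0 <= absK x.
Proof. by rewrite /absK; case: kval => [v|] //; exact: ltW (qpow_gt0 F _). Qed.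

Lemma absK_le {x l} : vanish_lt x l -> absK x <= qR ^ (- l).
Proof.
rewrite /absK; have := kvalP x; case: kval => [v [_ hn] h|_ _]; last exact: ltW (qpow_gt0 F _).
rewrite (ler_eXz2l (qR_gt1 F)) lerN2 leNgt; apply/negP => hlt.
by rewrite h ?eqxx in hn.
Qed.

Lemma absK_lt {x l} : absK x < qR ^ (1 - l) -> vanish_lt x l.
Proof.
rewrite /absK; have := kvalP x; case: kval => [v [hv _]|h _ n _]; last exact: h.
by rewrite (ltr_eXz2l (qR_gt1 F)) => hl; apply: vanish_ltW hv; lia.
Qed.

Lemma absK_eq {x v} : vanish_lt x v -> kcoef x v != 0 -> absK x = qR ^ (- v).
Proof. by move=> h1 h2; rewrite /absK (kval_eq h1 h2). Qed.

Lemma absK_eq0 x : absK x = 0 <-> forall n, kcoef x n = 0.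
Proof.
rewrite /absK; have := kvalP x; case: kval => [v [_ hn]|//].
split=> [e|h]; first by have := qpow_gt0 F (- v); rewrite e ltxx.
by rewrite h eqxx in hn.
Qed.

End AbsoluteValue.

Section Continuity.
Context {F : finFieldType}.
Local Notation K := (K F).
Local Notation O := (O F).
Local Notation qR := ((qq F)%:R : R).
Implicit Types (f g : O -> K) (l : int).

Lemma oval_integral (x : O) : vanish_lt (oval x) 0.
Proof. exact: oint. Qed.

Definition ocoef (x : O) (i : nat) : F := kcoef (oval x) i%:Z.

Definition kseries_coef (d : nat -> F) (n : int) : F :=
  if n is Posz k then d k else 0.
Lemma kseries_bnd d : lbounded (kseries_coef d).
Proof. by exists 0; case. Qed.
Lemma kseries_integral d n : n < 0 -> kcoef (MkK (kseries_bnd d)) n = 0.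
Proof. by case: n. Qed.
Definition oseries (d : nat -> F) : O := MkO (kseries_integral d).

Lemma ocoef_oseries d i : ocoef (oseries d) i = d i.
Proof. by []. Qed.

Lemma oval_inj : injective (@oval F).
Proof. by case=> x hx [y hy] /= e; subst y; congr MkO; apply: Prop_irrelevance. Qed.

Lemma ocoefK (x : O) : oseries (ocoef x) = x.
Proof. by apply: oval_inj; apply: kcoef_inj => -[k|k] //=; rewrite oval_integral. Qed.

Lemma eqmodT_ocoef (x y : O) (k : nat) :
  eqmodT (oval x) (oval y) k%:Z <-> forall i, (i < k)%N -> ocoef x i = ocoef y i.
Proof.
split=> h; first by move=> i hi; apply: h; rewrite ltz_nat.
by case=> [i|i] hi; [apply: h; rewrite -ltz_nat | rewrite !oval_integral].
Qed.

Definition kcont f := forall (x : O) l, exists k : nat,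
  forall y : O, eqmodT (oval y) (oval x) k%:Z -> eqmodT (f y) (f x) l.

Lemma kcontinuousP f : kcontinuous f <-> kcont f.
Proof.
split=> [hf x l|hf x e he].
  have [d hd hd'] := hf x _ (qpow_gt0 F (1 - l)).
  have [k hk] := qpow_small F d hd.
  exists k => y /eqmodT_sub /absK_le hy; apply/eqmodT_sub/absK_lt.
  exact/hd'/(le_lt_trans hy hk).
have [l hl] := qpow_small F e he; have [k hk] := hf x l%:Z.
exists (qR ^ (1 - k%:Z)); first exact: qpow_gt0.
move=> y /absK_lt /eqmodT_sub hy; apply: le_lt_trans hl.
exact/absK_le/eqmodT_sub/hk.
Qed.

Lemma eqmodT_oval_max (x y : O) (k1 k2 : nat) :
  eqmodT (oval y) (oval x) (maxn k1 k2)%:Z ->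
  eqmodT (oval y) (oval x) k1%:Z /\ eqmodT (oval y) (oval x) k2%:Z.
Proof. by move=> h; split; apply: eqmodTW h; rewrite lez_nat ?leq_maxl ?leq_maxr. Qed.

Lemma kcont_const (c : K) : kcont (fun _ => c).
Proof. by move=> x l; exists 0%N. Qed.

Lemma kcont_oval : kcont (@oval F).
Proof. by move=> x l; exists `|l|%N => y h; apply: eqmodTW h; lia. Qed.

Lemma kcont_add {f g} : kcont f -> kcont g -> kcont (fun x => kadd (f x) (g x)).
Proof.
move=> hf hg x l; have [k1 h1] := hf x l; have [k2 h2] := hg x l.
exists (maxn k1 k2) => y /eqmodT_oval_max[/h1 e1 /h2 e2] n hn.
by rewrite !kaddE e1 ?e2.
Qed.

Lemma kcont_sub {f g} : kcont f -> kcont g -> kcont (fun x => ksub (f x) (g x)).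
Proof.
move=> hf hg; apply: kcont_add => // x l; have [k hk] := hg x l.
by exists k => y /hk e n hn; rewrite /= e.
Qed.

Lemma kcont_vanish {f} x : kcont f -> exists k : nat,
  forall y : O, eqmodT (oval y) (oval x) k%:Z -> vanish_lt (f y) (klb (f x)).
Proof.
move=> hf; have [k hk] := hf x (klb (f x)).
by exists k => y /hk e n hn; rewrite e // vanish_lt_klb.
Qed.

Lemma kcont_mul {f g} : kcont f -> kcont g -> kcont (fun x => kmul (f x) (g x)).
Proof.
move=> hf hg x l.
have [k1 v1] := kcont_vanish x hf; have [k2 v2] := kcont_vanish x hg.
have [k3 e3] := hf x (l - klb (g x)); have [k4 e4] := hg x (l - klb (f x)).
exists (maxn (maxn k1 k2) (maxn k3 k4)).
move=> y /eqmodT_oval_max[/eqmodT_oval_max[/v1 h1 /v2 h2] /eqmodT_oval_max[/e3 h3 /e4 h4]].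
have := kmul_eqmodT h1 (vanish_lt_klb (f x)) h2 (vanish_lt_klb (g x)) h3 h4.
by rewrite !subrK minxx.
Qed.

Lemma kcont_ksum (T : Type) (g : T -> O -> K) (r : seq T) :
  (forall i, kcont (g i)) -> kcont (fun x => ksum [seq g i x | i <- r]).
Proof.
move=> hg; elim: r => [|i r IH]; first exact: kcont_const.
exact: kcont_add.
Qed.

Lemma kcont_kprod (T : Type) (g : T -> O -> K) (r : seq T) :
  (forall i, kcont (g i)) -> kcont (fun x => kprod [seq g i x | i <- r]).
Proof.
move=> hg; elim: r => [|i r IH]; first exact: kcont_const.
exact: kcont_mul.
Qed.

Lemma kcont_kexp f k : kcont f -> kcont (fun x => kexp (f x) k).
Proof.
move=> hf; elim: k => [|k IH]; first exact: kcont_const.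
exact: kcont_mul.
Qed.

Lemma kcont_psum {b : nat -> O -> K} (a : nat -> K) N :
  (forall n, kcont (b n)) -> kcont (psum b a N).
Proof.
move=> hb; apply: kcont_ksum => n.
exact: kcont_mul (kcont_const _) (hb n).
Qed.

End Continuity.

Section SupNorm.
Context {F : finFieldType}.
Local Notation K := (K F).
Local Notation O := (O F).
Implicit Types (g : O -> K) (B : R).

Local Notation o0 := (oseries (fun=> 0) : O).

Lemma supnorm_le g B : (forall x, absK (g x) <= B) -> supnorm g <= B.
Proof.
by move=> h; apply: ge_sup; [exists (absK (g o0)), o0 | move=> r [x _ <-]].
Qed.

Lemma supnorm_ub {g B} x : (forall y, absK (g y) <= B) -> absK (g x) <= supnorm g.
Proof.
move=> h; apply: sup_upper_bound; last by exists x.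
by split; [exists (absK (g o0)), o0 | exists B => r [y _ <-]].
Qed.

Lemma supnorm_attained {g B} x : (forall y, absK (g y) <= B) -> absK (g x) = B ->
  supnorm g = B.
Proof.
by move=> h e; apply: le_anti; rewrite supnorm_le //= -{1}e (supnorm_ub x h).
Qed.

End SupNorm.

Section UniformContinuity.
Context {F : finFieldType}.
Local Notation K := (K F).
Local Notation O := (O F).
Variables (f : O -> K) (l : int).
Hypothesis hf : kcont f.

Definition has_prefix (s : seq F) (x : O) :=
  forall i, (i < size s)%N -> ocoef x i = nth 0 s i.

Definition unif_on (s : seq F) := exists k : nat, forall x y : O,
  has_prefix s x -> has_prefix s y -> eqmodT (oval x) (oval y) k%:Z -> eqmodT (f x) (f y) l.

(* Points agreeing on [(size s).+1] digits share the same one-digit extension of [s]. *)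
Lemma unif_on_rcons s : (forall c, unif_on (rcons s c)) -> unif_on s.
Proof.
move=> hc; have [k hk] := choice hc.
exists (maxn (size s).+1 (\max_c k c)) => x y hx hy /eqmodT_oval_max[hxy hk'].
have hext (z : O) : has_prefix s z -> has_prefix (rcons s (ocoef z (size s))) z.
  move=> hz i; rewrite size_rcons ltnS leq_eqVlt nth_rcons.
  by case/orP=> [/eqP ->|hi]; [rewrite ltnn eqxx | rewrite hi hz].
have hyx : ocoef y (size s) = ocoef x (size s).
  by symmetry; move/eqmodT_ocoef: hxy; apply.
apply: (hk (ocoef x (size s))); [exact: hext | rewrite -hyx; exact: hext |].
apply: eqmodTW hk'; rewrite lez_nat; exact: leq_bigmax.
Qed.

Lemma not_unif_on_rcons {s} : ~ unif_on s -> exists c, ~ unif_on (rcons s c).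
Proof. by move=> hs; apply/existsNP => hc; apply/hs/unif_on_rcons. Qed.

(* Koenig's lemma: if uniform continuity fails, the digits of a point can be chosen one at
   a time so that it fails on every cylinder around that point, contradicting continuity. *)
Section Konig.
Hypothesis not_unif : ~ unif_on [::].

Fixpoint bad_prefix (n : nat) : {s : seq F | ~ unif_on s} :=
  if n is n'.+1 then
    let: exist s hs := bad_prefix n' in
    let: exist c hc := cid (not_unif_on_rcons hs) in
    exist _ (rcons s c) hc
  else exist _ [::] not_unif.

Lemma bad_prefix_rcons n : exists c, sval (bad_prefix n.+1) = rcons (sval (bad_prefix n)) c.
Proof.
rewrite /=; case: (bad_prefix n) => s hs /=.
by case: cid => c hc; exists c.
Qed.

Lemma size_bad_prefix n : size (sval (bad_prefix n)) = n.
Proof. by elim: n => // n IH; have [c ->] := bad_prefix_rcons n; rewrite size_rcons IH. Qed.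

Definition bad_limit : O := oseries (fun i => nth 0 (sval (bad_prefix i.+1)) i).

Lemma bad_limit_prefix n : has_prefix (sval (bad_prefix n)) bad_limit.
Proof.
elim: n => [|n IH] i; first by [].
have [c e] := bad_prefix_rcons n.
rewrite e size_rcons size_bad_prefix ltnS leq_eqVlt nth_rcons size_bad_prefix.
case/orP=> [/eqP ->|hi]; last by rewrite hi IH ?size_bad_prefix.
by rewrite ocoef_oseries e nth_rcons size_bad_prefix ltnn.
Qed.

Lemma bad_limit_absurd : False.
Proof.
have [k hk] := hf bad_limit l.
apply: (svalP (bad_prefix k)); exists k => x y hx hy _.
have near (z : O) : has_prefix (sval (bad_prefix k)) z -> eqmodT (f z) (f bad_limit) l.
  move=> hz; apply/hk/eqmodT_ocoef => i hi.
  by rewrite hz ?size_bad_prefix // (bad_limit_prefix k) ?size_bad_prefix.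
exact: eqmodT_trans (near x hx) (eqmodT_sym (near y hy)).
Qed.

End Konig.

Lemma kcont_uniform : exists k : nat, forall x y : O,
  eqmodT (oval x) (oval y) k%:Z -> eqmodT (f x) (f y) l.
Proof.
have [[k hk]|/bad_limit_absurd//] := pselect (unif_on [::]).
by exists k => x y; apply: hk.
Qed.

End UniformContinuity.

Section Boundedness.
Context {F : finFieldType}.
Local Notation K := (K F).
Local Notation O := (O F).

Lemma kcont_vanish_uniform {f : O -> K} : kcont f -> exists L, forall x, vanish_lt (f x) L.
Proof.
move=> hf; have [k hk] := kcont_uniform f 0 hf.
pose tseries (u : k.-tuple F) := oseries (fun i => nth 0 u i).
pose tup (x : O) : k.-tuple F := [tuple ocoef x i | i < k].
have htup x : eqmodT (oval x) (oval (tseries (tup x))) k%:Z.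
  apply/eqmodT_ocoef => i hi.
  by rewrite ocoef_oseries -[i]/(nat_of_ord (Ordinal hi)) -tnth_nth tnth_mktuple.
exists (\big[Num.min/0]_(u : k.-tuple F) klb (f (tseries u))).
move=> x n hn; rewrite (hk _ _ (htup x)); last first.
  by apply: lt_le_trans hn _; elim/big_rec: _ => // u a _ ha; rewrite ge_min ha orbT.
apply: vanish_lt_klb; apply: lt_le_trans hn _.
by rewrite (bigD1 (tup x)) //= ge_min lexx.
Qed.

Lemma kcont_bounded (f : O -> K) : kcont f -> exists B, forall x, absK (f x) <= B.
Proof.
by case/kcont_vanish_uniform => L hL; exists ((qq F)%:R ^ (- L)) => x; apply: absK_le.
Qed.

End Boundedness.

Section Monomials.
Context {F : finFieldType}.
Local Notation q := (qq F).

Lemma q_gt0 : (0 < q)%N.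
Proof. exact: ltn_trans (qq_gt1 F). Qed.

Lemma expf_qq_pred (x : F) : x ^+ q.-1 = (x != 0)%:R.
Proof.
have hq : q = q.-1.+1 by rewrite prednK // q_gt0.
have [->|hx] := eqVneq x 0.
  have : (0 < q.-1)%N by rewrite -ltnS -hq qq_gt1.
  by rewrite expr0n lt0n => /negbTE ->.
by apply: (mulfI hx); rewrite -exprS -hq mulr1 expf_card.
Qed.

Lemma sum_ord_muln {V : nmodType} {p M : nat} (g : nat -> V) :
  \sum_(j < p * M) g j = \sum_(a < p) \sum_(j' < M) g (a + p * j')%N.
Proof.
elim: M => [|M IH]; first by rewrite muln0 big_ord0 big1 // => a _; rewrite big_ord0.
rewrite mulnSr big_split_ord /= IH -big_split /=.
by apply: eq_bigr => a _; rewrite big_ord_recr /= addnC.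
Qed.

Definition mono_upto (N j : nat) (d : nat -> F) : F := \prod_(n < N) d n ^+ digit F j n.
Definition mono (j : nat) (d : nat -> F) : F := mono_upto (top_digit F j).+1 j d.

Lemma digit_small j n : (j < q ^ n)%N -> digit F j n = 0%N.
Proof. by move=> h; rewrite /digit divn_small // mod0n. Qed.

Lemma mono_upto_widen {N N' j} d : (N <= N')%N -> (j < q ^ N)%N ->
  mono_upto N' j d = mono_upto N j d.
Proof.
move=> hN hj; rewrite /mono_upto -(subnKC hN) big_split_ord /= [X in _ * X]big1 ?mulr1 //.
move=> i _; rewrite digit_small ?expr0 //; apply: leq_trans hj _.
by rewrite leq_pexp2l ?q_gt0 // leq_addr.
Qed.

Lemma mono_uptoE N j d : (j < q ^ N)%N -> mono j d = mono_upto N j d.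
Proof.
have hj : (j < q ^ (top_digit F j).+1)%N by exact: trunc_log_ltn (qq_gt1 F).
move=> hN; rewrite /mono; case: (leqP N (top_digit F j).+1) => h.
  by rewrite (mono_upto_widen d h hN).
by rewrite (mono_upto_widen d (ltnW h) hj).
Qed.

Definition consd (x : F) (e : nat -> F) (i : nat) : F := if i is i'.+1 then e i' else x.

Lemma mono_upto_cons N a j' x e : (a < q)%N ->
  mono_upto N.+1 (a + q * j') (consd x e) = x ^+ a * mono_upto N j' e.
Proof.
move=> ha; rewrite /mono_upto big_ord_recl /=.
have hdiv : ((a + q * j') %/ q = j')%N.
  by rewrite addnC mulnC divnMDl ?q_gt0 // divn_small // addn0.
congr (_ * _); first by rewrite /digit expn0 divn1 addnC mulnC modnMDl modn_small.
by apply: eq_bigr => i _; rewrite /digit expnS divnMA hdiv.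
Qed.

Lemma poly_fun_eq0 (C : nat -> F) : (forall x : F, \sum_(a < q) C a * x ^+ a = 0) ->
  forall a, (a < q)%N -> C a = 0.
Proof.
move=> h a ha; pose P := \poly_(a < q) C a.
have hP : P = 0.
  apply/eqP; apply: contraT => hP; have := max_poly_roots hP (rs := enum F).
  rewrite enum_uniq -cardE ltnNge size_poly => /(_ _ isT) //; apply.
  by apply/allP => x _; apply/rootP; rewrite horner_poly; apply: h.
by have := coef_poly q C a; rewrite -/P hP coef0 ha.
Qed.

Lemma mono_upto_free N (c : nat -> F) :
  (forall d, \sum_(j < q ^ N) c j * mono_upto N j d = 0) ->
  forall j, (j < q ^ N)%N -> c j = 0.
Proof.
(* With [d 1, d 2, ...] fixed, the sum is a polynomial of degree < q in [d 0]. *)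
elim: N c => [|N IH] c h j hj.
  move: hj (h (fun=> 0)); rewrite expn0 ltnS leqn0 => /eqP ->.
  by rewrite big_ord1 /mono_upto big_ord0 mulr1.
have hC e a : (a < q)%N -> \sum_(j' < q ^ N) c (a + q * j')%N * mono_upto N j' e = 0.
  apply: (poly_fun_eq0 (fun a => \sum_(j' < q ^ N) c (a + q * j')%N * mono_upto N j' e)).
  move=> x; rewrite -[RHS](h (consd x e)) expnS.
  rewrite (sum_ord_muln (fun j => c j * mono_upto N.+1 j (consd x e))).
  apply: eq_bigr => a' _; rewrite mulr_suml; apply: eq_bigr => j' _.
  by rewrite mono_upto_cons // [x ^+ _ * _]mulrC mulrA.
rewrite (divn_eq j q) addnC mulnC.
apply: (IH (fun j' => c (j %% q + q * j')%N)); first by move=> e; apply: hC; rewrite ltn_mod q_gt0.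
by rewrite ltn_divLR ?q_gt0 // -expnSr.
Qed.

Definition lagrange (x : F) : {poly F} := 1 - ('X - x%:P) ^+ q.-1.

Lemma size_lagrange x : (size (lagrange x) <= q)%N.
Proof.
apply: leq_trans (size_polyD _ _) _.
by rewrite size_polyN size_exp_XsubC prednK ?q_gt0 // geq_max size_poly1 q_gt0 leqnn.
Qed.

Lemma lagrangeE x y : (lagrange x).[y] = (y == x)%:R.
Proof. by rewrite !hornerE expf_qq_pred subr_eq0; case: eqP; rewrite ?subr0 ?subrr. Qed.

Lemma mono_upto_span {N} {h : (nat -> F) -> F} :
  (forall d d', (forall i, (i < N)%N -> d i = d' i) -> h d = h d') ->
  exists c : nat -> F, forall d, h d = \sum_(j < q ^ N) c j * mono_upto N j d.
Proof.
elim: N h => [|N IH] h hh.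
  exists (fun=> h (fun=> 0)) => d; rewrite expn0 big_ord1 /mono_upto big_ord0 mulr1.
  exact: hh.
have hcons x : exists c : nat -> F, forall e,
    h (consd x e) = \sum_(j < q ^ N) c j * mono_upto N j e.
  by apply: IH => e e' he; apply: hh => -[|i] //= hi; exact: he.
have [g hg] := choice hcons.
(* Lagrange interpolation in the first variable. *)
exists (fun j => \sum_(x : F) (lagrange x)`_(j %% q)%N * g x (j %/ q)%N) => d.
set e := fun i => d i.+1.
have hd : d = consd (d 0%N) e by apply: funext => -[].
have -> : h d = \sum_(x : F) (lagrange x).[d 0%N] * h (consd x e).
  rewrite (bigD1 (d 0%N)) //= lagrangeE eqxx mul1r -hd big1 ?addr0 // => x hx.
  by rewrite lagrangeE eq_sym (negbTE hx) mul0r.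
rewrite {2}hd expnS.
rewrite (sum_ord_muln (fun j => (\sum_x (lagrange x)`_(j %% q)%N * g x (j %/ q)%N) *
  mono_upto N.+1 j (consd (d 0%N) e))).
under eq_bigr => x _ do rewrite (horner_coef_wide _ (size_lagrange x)) hg mulr_suml.
rewrite exchange_big /=; apply: eq_bigr => a _.
under eq_bigr do rewrite mulr_sumr.
rewrite exchange_big /=; apply: eq_bigr => j' _; rewrite mono_upto_cons // mulr_suml.
rewrite addnC mulnC modnMDl modn_small // divnMDl ?q_gt0 // divn_small // addn0.
by apply: eq_bigr => x _; ring.
Qed.

Lemma mono_free {B} {c : nat -> F} : (forall d, \sum_(j < B) c j * mono j d = 0) ->
  forall j, (j < B)%N -> c j = 0.
Proof.
move=> h j hj; have hB : (B < q ^ B)%N by exact: ltn_expl (qq_gt1 F).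
pose c' k := if (k < B)%N then c k else 0.
suff /(_ j (ltn_trans hj hB)) : forall k, (k < q ^ B)%N -> c' k = 0 by rewrite /c' hj.
apply: mono_upto_free => d; rewrite -(subnKC (ltnW hB)) big_split_ord /=.
rewrite [X in _ + X]big1 ?addr0 => [|i _]; last by rewrite /c' ltnNge leq_addr mul0r.
rewrite -[RHS](h d); apply: eq_bigr => i _.
by rewrite /c' ltn_ord (mono_uptoE B) // (ltn_trans (ltn_ord i) hB).
Qed.

Lemma mono_span {N} {h : (nat -> F) -> F} :
  (forall d d', (forall i, (i < N)%N -> d i = d' i) -> h d = h d') ->
  exists c : nat -> F, forall d, h d = \sum_(j < q ^ N) c j * mono j d.
Proof.
move=> hh; have [c hc] := mono_upto_span hh.
by exists c => d; rewrite hc; apply: eq_bigr => j _; rewrite (mono_uptoE N).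
Qed.

End Monomials.

Lemma exists_min_valuation {F : finFieldType} {a : nat -> K F} :
  (forall l, exists N0 : nat, forall n, (N0 <= n)%N -> vanish_lt (a n) l) ->
  (exists n i, kcoef (a n) i != 0) ->
  exists v n1, (forall n, vanish_lt (a n) v) /\ kcoef (a n1) v != 0.
Proof.
move=> ha [n0 [i0 hi0]]; have [N hN] := ha (i0 + 1).
pose L := Num.min i0 (\big[Num.min/0]_(n < N) klb (a n)).
have hn0 : (n0 < N)%N by rewrite ltnNge; apply/negP => /hN h; rewrite h ?eqxx in hi0; lia.
have hL : `|i0 - L|%N%:Z = i0 - L by rewrite gez0_abs // subr_ge0 ge_min lexx.
have hw : [exists n : 'I_N, kcoef (a n) (L + `|i0 - L|%N%:Z) != 0].
  by apply/existsP; exists (Ordinal hn0); rewrite hL addrCA subrr addr0.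
have hP : exists k : nat, [exists n : 'I_N, kcoef (a n) (L + k%:Z) != 0] by exists `|i0 - L|%N.
case: (ex_minnP hP) => k /existsP[n1 hn1] hmin.
have hk : L + k%:Z <= i0.
  by have := hmin _ hw; lia.
exists (L + k%:Z), n1; split=> // n i hi.
have [hnN|hNn] := ltnP n N; last by apply: hN => //; lia.
have [hiL|hLi] := ltrP i L.
  apply: vanish_lt_klb; apply: lt_le_trans hiL _; rewrite ge_min (bigD1 (Ordinal hnN)) //=.
  by rewrite ge_min lexx orbT.
have [j hj] : exists j : nat, i = L + j%:Z by exists `|i - L|%N; rewrite gez0_abs ?subr_ge0; lia.
subst i; apply/eqP; apply: contraT => hnz.
by have := hmin j (introT existsP (ex_intro _ (Ordinal hnN) hnz)); lia.
Qed.

Section OrthonormalCriterion.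
Context {F : finFieldType}.
Local Notation K := (K F).
Local Notation O := (O F).
Local Notation q := (qq F).
Local Notation qR := ((qq F)%:R : R).
Implicit Types (f : O -> K) (a : nat -> K) (l L : int).

Variable b : nat -> O -> K.
Hypothesis b_cont : forall n, kcont (b n).
Hypothesis b_integral : forall n x, vanish_lt (b n x) 0.
Hypothesis b_mono : forall n x, kcoef (b n x) 0 = mono n (ocoef x).

Definition texpansion f a :=
  (forall l, exists N0 : nat, forall n, (N0 <= n)%N -> vanish_lt (a n) l) /\
  (forall l, exists N0 : nat, forall N, (N0 <= N)%N ->
     forall x, eqmodT (f x) (psum b a N x) l).

Lemma psumE a N x i : kcoef (psum b a N x) i = \sum_(n < N) kcoef (kmul (a n) (b n x)) i.
Proof.
by rewrite /psum ksumE big_map (_ : iota 0 N = index_iota 0 N) ?big_mkord // /index_iota subn0.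
Qed.

Lemma expansionP {f} a : kcont f -> expansion b f a <-> texpansion f a.
Proof.
move=> hf; have hbd N : exists B, forall x, absK (ksub (f x) (psum b a N x)) <= B.
  exact/kcont_bounded/kcont_sub/kcont_psum.
split=> [[ha hfa]|[ha hfa]]; split.
- move=> l; have [N0 hN0] := ha _ (qpow_gt0 F (1 - l)).
  by exists N0 => n /hN0 /absK_lt.
- move=> l; have [N0 hN0] := hfa _ (qpow_gt0 F (1 - l)).
  exists N0 => N /hN0 hN x; apply/eqmodT_sub/absK_lt; apply: le_lt_trans hN.
  by have [B hB] := hbd N; apply: supnorm_ub hB.
- move=> e /(qpow_small F) [l hl]; have [N0 hN0] := ha l%:Z.
  by exists N0 => n /hN0 /absK_le /le_lt_trans; apply.
- move=> e /(qpow_small F) [l hl]; have [N0 hN0] := hfa l%:Z.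
  exists N0 => N /hN0 hN; apply: le_lt_trans hl; apply: supnorm_le => x.
  exact/absK_le/eqmodT_sub.
Qed.

Lemma texpansion_lead {f a v} : texpansion f a -> (forall n, vanish_lt (a n) v) ->
  exists N0 : nat, forall N, (N0 <= N)%N -> forall x, vanish_lt (f x) v /\
    kcoef (f x) v = \sum_(n < N) kcoef (a n) v * mono n (ocoef x).
Proof.
move=> [_ hfa] hv; have [N0 hN0] := hfa (v + 1).
have hav n x := kmul_vanish (hv n) (b_integral n x); rewrite addr0 in hav.
exists N0 => N /hN0 hN x; split=> [i hi|].
  by rewrite hN ?psumE ?big1 //; [move=> n _; apply: hav | lia].
rewrite hN ?psumE; last by lia.
by apply: eq_bigr => n _; have := kmul_coef_lead (hv n) (b_integral n x); rewrite addr0 b_mono.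
Qed.

Lemma texpansion_norm {f a} : texpansion f a ->
  (exists n, supnorm f = absK (a n)) /\ (forall n, absK (a n) <= supnorm f).
Proof.
move=> hfa; have [/(exists_min_valuation hfa.1) [v [n1 [hv hn1]]]|ha0] :=
  pselect (exists n i, kcoef (a n) i != 0); last first.
  have {}ha0 n i : kcoef (a n) i = 0.
    by apply/eqP; apply: contraT => hi; case: ha0; exists n, i.
  have hf0 x : absK (f x) = 0.
    apply/absK_eq0 => i; have hv n : vanish_lt (a n) (i + 1) by move=> j _; apply: ha0.
    by have [N0 hN0] := texpansion_lead hfa hv; apply: (hN0 N0 (leqnn _) x).1; lia.
  have hs : supnorm f = 0 by apply: (supnorm_attained (oseries (fun=> 0))) => [x|]; rewrite hf0.
  by split; [exists 0%N|move=> n]; rewrite hs (proj2 (absK_eq0 _) (ha0 _)).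
(* At the least valuation [v] of the [a n], the coefficient of [f x] is a nonzero
   combination of the monomials [mono n (ocoef x)]. *)
have [N0 hN0] := texpansion_lead hfa hv; set N := maxn N0 n1.+1.
have [d hd] : exists d, \sum_(n < N) kcoef (a n) v * mono n d != 0.
  apply/not_existsP => h0; move: hn1.
  rewrite (mono_free (B := N) (c := fun n => kcoef (a n) v)) ?eqxx //.
    by move=> d; apply/eqP/negPn/negP/h0.
  by rewrite leq_max ltnSn orbT.
have hs : supnorm f = qR ^ (- v).
  have hfN := hN0 N (leq_maxl _ _).
  apply: (supnorm_attained (oseries d)) => [x|]; first exact/absK_le/(hfN x).1.
  by apply: absK_eq; have [] := hfN (oseries d) => //= _ ->.
by split; [exists n1; rewrite hs (absK_eq (hv n1) hn1) | move=> n; rewrite hs absK_le].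
Qed.

Lemma psum_coefD {a1 a2 a3} N x i :
  (forall n j, kcoef (a3 n) j = kcoef (a1 n) j + kcoef (a2 n) j) ->
  kcoef (psum b a3 N x) i = kcoef (psum b a1 N x) i + kcoef (psum b a2 N x) i.
Proof.
move=> h; rewrite !psumE -big_split /=; apply: eq_bigr => n _.
set L := Num.min (klb (a1 n)) (klb (a2 n)).
have h1 : vanish_lt (a1 n) L by apply: vanish_ltW (vanish_lt_klb _); rewrite ge_min lexx.
have h2 : vanish_lt (a2 n) L by apply: vanish_ltW (vanish_lt_klb _); rewrite ge_min lexx orbT.
have h3 : vanish_lt (a3 n) L by move=> j hj; rewrite h h1 ?h2 ?addr0.
exact: kmulDl_coef h1 h2 h3 (b_integral n x) (h n).
Qed.

Lemma texpansion_unique f a a' : texpansion f a -> texpansion f a' -> a = a'.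
Proof.
move=> [ha hfa] [ha' hfa']; pose d n := ksub (a n) (a' n).
have hd : texpansion (fun=> kzero F) d.
  split=> l.
    have [N1 h1] := ha l; have [N2 h2] := ha' l.
    exists (maxn N1 N2) => n; rewrite geq_max => /andP[/h1 e1 /h2 e2] j hj.
    by rewrite ksubE e1 ?e2 ?subr0.
  have [N1 h1] := hfa l; have [N2 h2] := hfa' l.
  exists (maxn N1 N2) => N; rewrite geq_max => /andP[/h1 e1 /h2 e2] x j hj.
  have := psum_coefD N x j (a3 := a) (a1 := d) (a2 := a') (fun n i => esym (subrK _ _)).
  rewrite -e1 // -e2 // kzeroE => h; apply/esym/(addIr (kcoef (f x) j)).
  by rewrite add0r -h.
have [_ hle] := texpansion_norm hd.
have hz : supnorm (fun=> kzero F) = 0 :> R.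
  by apply: (supnorm_attained (oseries (fun=> 0))) => [x|]; rewrite (proj2 (absK_eq0 _)).
apply: funext => n; apply: kcoef_inj => i; apply/eqP; rewrite -subr_eq0 -ksubE.
by apply/eqP; move: i; apply/absK_eq0/le_anti; rewrite -{1}hz hle absK_ge0.
Qed.

Definition kmon_coef l (c : F) i := if i == l then c else 0.
Lemma kmon_bnd l c : lbounded (kmon_coef l c).
Proof. by exists l => i hi; rewrite /kmon_coef (lt_eqF hi). Qed.
Definition kmon l c : K := MkK (kmon_bnd l c).

Lemma kmon_vanish l c : vanish_lt (kmon l c) l.
Proof. by move=> i hi; rewrite /= /kmon_coef (lt_eqF hi). Qed.

Lemma psum_kmon_coef (c : nat -> F) l N x i : i <= l ->
  kcoef (psum b (fun n => kmon l (c n)) N x) i =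
  (i == l)%:R * \sum_(n < N) c n * mono n (ocoef x).
Proof.
rewrite le_eqVlt psumE => /orP[/eqP ->|hi]; rewrite ?eqxx ?mul1r ?(lt_eqF hi) ?mul0r.
  apply: eq_bigr => n _; have := kmul_coef_lead (kmon_vanish l (c n)) (b_integral n x).
  by rewrite addr0 b_mono /= /kmon_coef eqxx.
rewrite big1 // => n _; have := kmul_vanish (kmon_vanish l (c n)) (b_integral n x).
by rewrite addr0; apply.
Qed.

Lemma psum_widen {a B N} x : (B <= N)%N -> (forall n, (B <= n)%N -> a n = kzero F) ->
  psum b a N x = psum b a B x.
Proof.
move=> hBN ha; apply: kcoef_inj => i; rewrite !psumE -(subnKC hBN) big_split_ord /=.
rewrite [X in _ + X]big1 ?addr0 // => n _; rewrite ha ?leq_addr //.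
exact: kmul0l_coef.
Qed.

Section Approximation.
Variable f : O -> K.
Hypothesis f_cont : kcont f.
Variable L : int.
Hypothesis f_vanish : forall x, vanish_lt (f x) L.

Definition approx (t : nat) (a : nat -> K) (B : nat) :=
  [/\ forall n, (B <= n)%N -> a n = kzero F, forall n, vanish_lt (a n) L &
      forall x, eqmodT (f x) (psum b a B x) (L + t%:Z)].

Lemma approx0 : approx 0 (fun=> kzero F) 0.
Proof. by split=> // x i hi; rewrite f_vanish //; lia. Qed.

Lemma residual_mono a B l : exists c : nat -> F, exists k : nat,
  forall x, kcoef (ksub (f x) (psum b a B x)) l = \sum_(j < q ^ k) c j * mono j (ocoef x).
Proof.
pose r x := ksub (f x) (psum b a B x).
have [k hk] := kcont_uniform r (l + 1) (kcont_sub f_cont (kcont_psum a B b_cont)).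
have hdep d d' : (forall i, (i < k)%N -> d i = d' i) ->
    kcoef (r (oseries d)) l = kcoef (r (oseries d')) l.
  move=> hdd; apply: (hk _ _ _ l); last by lia.
  by apply/eqmodT_ocoef => i hi; rewrite !ocoef_oseries hdd.
have [c hc] := mono_span hdep.
by exists c, k => x; rewrite -hc ocoefK.
Qed.

Lemma approx_step {t a B} : approx t a B -> exists a' B',
  approx t.+1 a' B' /\ forall n, eqmodT (a' n) (a n) (L + t%:Z).
Proof.
(* The residual's coefficient at [l] is a combination of finitely many digit monomials;
   adding it at [T ^ l] to the coefficients [a n] removes it. *)
case=> ha0 haL hfa; set l := L + t%:Z.
have [c [k hc]] := residual_mono a B l.
pose c' n := if (n < q ^ k)%N then c n else 0.
have hc' d : \sum_(n < maxn B (q ^ k)) c' n * mono n d = \sum_(n < q ^ k) c n * mono n d.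
  rewrite -(subnKC (leq_maxr B (q ^ k))) big_split_ord /= [X in _ + X]big1 => [|n _].
    by rewrite addr0; apply: eq_bigr => n _; rewrite /c' ltn_ord.
  by rewrite /c' ltnNge leq_addr mul0r.
exists (fun n => kadd (a n) (kmon l (c' n))), (maxn B (q ^ k)); split; last first.
  by move=> n i hi; rewrite kaddE kmon_vanish // addr0.
split.
- move=> n; rewrite geq_max => /andP[/ha0 -> hn]; apply: kcoef_inj => i.
  by rewrite kaddE kzeroE add0r /= /kmon_coef /c' ltnNge hn /=; case: ifP.
- by move=> n i hi; rewrite kaddE haL ?kmon_vanish ?addr0 //; lia.
move=> x i hi; rewrite (psum_coefD (a1 := a) (a2 := fun n => kmon l (c' n))) //.
rewrite (psum_widen (B := B)) ?leq_maxl // psum_kmon_coef; last by lia.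
have [->|hil] := eqVneq i l; last by rewrite mul0r addr0 hfa //; lia.
by rewrite mul1r hc' -hc ksubE addrC subrK.
Qed.

Fixpoint approx_seq (t : nat) : {p : (nat -> K) * nat | approx t p.1 p.2} :=
  if t is t'.+1 then
    let a' := cid (approx_step (svalP (approx_seq t'))) in
    let B' := cid (svalP a') in
    exist _ (sval a', sval B') (proj1 (svalP B'))
  else exist _ (fun=> kzero F, 0%N) approx0.

Definition approx_coef (t : nat) := (sval (approx_seq t)).1.
Definition approx_len (t : nat) := (sval (approx_seq t)).2.

Lemma approx_seqP t : approx t (approx_coef t) (approx_len t).
Proof. exact: svalP (approx_seq t). Qed.

Lemma approx_coef_step t n : eqmodT (approx_coef t.+1 n) (approx_coef t n) (L + t%:Z).
Proof.
exact: (proj2 (svalP (cid (svalP (cid (approx_step (svalP (approx_seq t)))))))).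
Qed.

Lemma approx_coef_stable {s t} n : (s <= t)%N ->
  eqmodT (approx_coef t n) (approx_coef s n) (L + s%:Z).
Proof.
elim: t => [|t IH]; first by rewrite leqn0 => /eqP ->.
rewrite leq_eqVlt => /orP[/eqP <- //|hs].
apply: eqmodT_trans (IH hs); apply: eqmodTW (approx_coef_step t n); lia.
Qed.

(* A stage after which the coefficient at [i] no longer changes. *)
Definition approx_stage (i : int) : nat := `|i - L|.+1.

Definition approx_lim_coef n i := kcoef (approx_coef (approx_stage i) n) i.
Lemma approx_lim_bnd n : lbounded (approx_lim_coef n).
Proof. by exists L => i hi; have [_ h _] := approx_seqP (approx_stage i); apply: h. Qed.
Definition approx_lim n : K := MkK (approx_lim_bnd n).

Lemma approx_lim_vanish n : vanish_lt (approx_lim n) L.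
Proof. by move=> i hi; have [_ h _] := approx_seqP (approx_stage i); apply: h. Qed.

Lemma approx_lim_eqmodT t n : eqmodT (approx_lim n) (approx_coef t n) (L + t%:Z).
Proof.
move=> i hi; have [hiL|hLi] := ltrP i L.
  by rewrite approx_lim_vanish //; have [_ h _] := approx_seqP t; rewrite h.
have hs : i < L + (approx_stage i)%:Z.
  by rewrite /approx_stage; have := gez0_abs (m := i - L); rewrite subr_ge0 => /(_ hLi); lia.
rewrite /= /approx_lim_coef; case: (leqP (approx_stage i) t) => h.
  exact: esym (approx_coef_stable n h i hs).
exact: approx_coef_stable n (ltnW h) i hi.
Qed.

Lemma approx_lim_texpansion : texpansion f approx_lim.
Proof.
split=> l; have [t hlt] := exists_ltz_addn l L; have [ha0 haL hfa] := approx_seqP t.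
  exists (approx_len t) => n /ha0 e i hi; rewrite (approx_lim_eqmodT t); last by lia.
  by rewrite e kzeroE.
exists (approx_len t) => N hN x i hi; rewrite hfa; last by lia.
rewrite -(psum_widen x hN ha0) !psumE; apply: eq_bigr => n _.
have := kmul_eqmodT (haL n) (approx_lim_vanish n) (b_integral n x) (b_integral n x)
  (eqmodT_sym (approx_lim_eqmodT t n)) (eqmodT_refl _ t%:Z).
by apply; rewrite lt_min; apply/andP; split; lia.
Qed.

End Approximation.

Theorem orthonormal_basis_of_mono : orthonormal_basis b.
Proof.
split=> [n|f /kcontinuousP hf]; first exact/kcontinuousP.
split; first by have [L hL] := kcont_vanish_uniform hf; eexists;
  apply/(expansionP _ hf); exact: (approx_lim_texpansion _ hf _ hL).
split=> [a a' /(expansionP _ hf) ha /(expansionP _ hf) ha'|a /(expansionP _ hf)].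
  exact: texpansion_unique ha ha'.
exact: texpansion_norm.
Qed.

End OrthonormalCriterion.

Definition qsum (p n : nat) : nat := \sum_(1 <= i < n.+1) p ^ (n - i).

Lemma qsumS p n : qsum p n.+1 = (p ^ n + qsum p n)%N.
Proof. by rewrite /qsum big_nat_recl // subn1. Qed.

Section LeadingCoefficients.
Context {F : finFieldType}.
Local Notation q := (qq F).

Lemma finField_prod_nonzero : \prod_(c : F | c != 0) c = -1.
Proof.
have h := finField_genPoly F; rewrite (bigD1 0) //= subr0 in h.
have hX : 'X^q - 'X = 'X * ('X^(q.-1) - 1) :> {poly F}.
  by rewrite mulrBr mulr1 -exprS prednK // q_gt0.
have hP : 'X^(q.-1) - 1 = \prod_(c : F | c != 0) ('X - c%:P).
  by apply: (mulfI (negbT (@polyX_eq0 F))); rewrite -hX.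
have hq1 : (q.-1 != 0)%N by rewrite -lt0n -ltnS prednK ?q_gt0 // qq_gt1.
move: (congr1 (horner^~ 0) hP); rewrite horner_prod !hornerE expr0n (negbTE hq1) sub0r.
under eq_bigr do rewrite hornerXsubC sub0r.
by rewrite prodrN cardC1 -/q expf_qq_pred oppr_eq0 oner_eq0 mul1r.
Qed.

Definition first_nz (u : seq F) : nat := find (fun c => c != 0) u.

Lemma big_tuple_cons (R : Type) (idx : R) (op : Monoid.com_law idx) n
    (g : n.+1.-tuple F -> R) :
  \big[op/idx]_(u : n.+1.-tuple F) g u =
  \big[op/idx]_(c : F) \big[op/idx]_(t : n.-tuple F) g [tuple of c :: t].
Proof.
rewrite pair_big /= (reindex (fun p : F * n.-tuple F => [tuple of p.1 :: p.2])) //=.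
exists (fun u : n.+1.-tuple F => (thead u, [tuple of behead u])).
  by move=> [c t] _ /=; congr pair; apply: val_inj.
by move=> u _; rewrite [in RHS](tuple_eta u).
Qed.

Lemma sum_first_nz n : (\sum_(u : n.-tuple F) first_nz u)%N = qsum q n.
Proof.
elim: n => [|n IH]; first by rewrite /qsum big_geq // big1 // => t _; rewrite tuple0.
rewrite (big_tuple_cons _ 0%N addn) /= (bigD1 0) //= eqxx.
rewrite [X in (_ + X)%N]big1 => [|c hc]; last by apply: big1 => t _; rewrite hc.
under eq_bigr do rewrite -addn1.
by rewrite addn0 big_split /= sum1_card card_tuple IH qsumS addnC.
Qed.

Lemma prod_first_nz n (a : F) :
  \prod_(u : n.-tuple F) nth a u (first_nz u) = a * (-1) ^+ qsum q n.
Proof.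
elim: n => [|n IH].
  rewrite /qsum big_geq // (big_pred1 [tuple]) ?mulr1 // => t.
  by apply/esym/eqP; rewrite [t]tuple0.
rewrite (big_tuple_cons _ (1 : F) *%R) /= (bigD1 0) //=.
under eq_bigr do rewrite /first_nz /= eqxx.
(* Tuples with nonzero head contribute [(\prod_(c != 0) c) ^+ q ^ n]. *)
rewrite IH (eq_bigr (fun c => c ^+ (q ^ n))) => [|c hc]; last first.
  under eq_bigr do rewrite /first_nz /= hc.
  by rewrite prodr_const card_tuple.
by rewrite prodrXl finField_prod_nonzero qsumS exprD; ring.
Qed.

End LeadingCoefficients.

Section CarlitzPolynomials.
Context {F : finFieldType}.
Local Notation K := (K F).
Local Notation O := (O F).
Local Notation q := (qq F).
Implicit Types (x : O).

Lemma qpow_gt1 i : (0 < i)%N -> (1 < q ^ i)%N.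
Proof. by move=> hi; rewrite -(exp1n i) ltn_exp2r -?lt0n ?qq_gt1. Qed.

(* Each [bracket i = T (T^(q^i - 1) - 1)] has valuation 1 and unit part [-1] at [T = 0]. *)
Lemma Fpol_lead n : vanish_lt (kpoly (Fpol F n)) (qsum q n)%:Z /\
  kcoef (kpoly (Fpol F n)) (qsum q n)%:Z = (-1) ^+ qsum q n.
Proof.
pose Q := \prod_(1 <= i < n.+1) ('X^((q ^ i).-1) - 1) ^+ (q ^ (n - i)) : {poly F}.
have hF : Fpol F n = 'X^(qsum q n) * Q.
  rewrite /Fpol /qsum /Q -prodrXr -big_split /=; apply: eq_big_nat => i /andP[hi _].
  rewrite /bracket -exprMn; congr (_ ^+ _).
  by rewrite mulrBr mulr1 -exprS prednK // ltnW // qpow_gt1.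
have hQ0 : Q`_0 = (-1) ^+ qsum q n.
  rewrite -horner_coef0 /Q horner_prod /qsum -prodrXr; apply: eq_big_nat => i /andP[hi _].
  have hqi : ((q ^ i).-1 != 0)%N by rewrite -lt0n -ltnS prednK ?expn_gt0 ?q_gt0 ?qpow_gt1.
  by rewrite !hornerE expr0n (negbTE hqi) sub0r.
split; last by rewrite kpolyE hF coefXnM ltnn subnn hQ0.
by case=> [k|k] hk //; rewrite kpolyE hF coefXnM -ltz_nat hk.
Qed.

Lemma kinv_lead {y : K} {v} : vanish_lt y v -> kcoef y v != 0 ->
  vanish_lt (kinv y) (- v) /\ kcoef (kinv y) (- v) = (kcoef y v)^-1.
Proof.
move=> hv hn; have hk := kval_eq hv hn; split=> [i hi|]; rewrite /= /kinv_coef hk.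
  by case E: (i + v) => [k|k] //; lia.
by rewrite addNr /invc /= addr0.
Qed.

Definition digit_diff x {n} (t : n.-tuple F) : n.-tuple F :=
  [tuple ocoef x i - nth 0 t i | i < n].

Lemma nth_digit_diff x {n} (t : n.-tuple F) k :
  (k < n)%N -> nth 0 (digit_diff x t) k = ocoef x k - nth 0 t k.
Proof. by move=> hk; rewrite -[k]/(nat_of_ord (Ordinal hk)) -tnth_nth tnth_mktuple. Qed.

Lemma digit_diff_inj x n : injective (@digit_diff x n).
Proof.
move=> t1 t2 /(congr1 (fun u : n.-tuple F => nth 0 (tval u))) h.
apply: eq_from_tnth => i; have := congr1 (fun g => g (nat_of_ord i)) h.
by rewrite /= !nth_digit_diff // !(tnth_nth 0) => /addrI/oppr_inj.
Qed.

(* The first nonzero coefficient of [x - Poly t] sits where the digits of [x] and [t] first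
   differ, or at [n] if they never do. *)
Lemma factor_lead x {n} (t : n.-tuple F) (u := digit_diff x t) :
  vanish_lt (ksub (oval x) (kpoly (Poly t))) (first_nz u)%:Z /\
  kcoef (ksub (oval x) (kpoly (Poly t))) (first_nz u)%:Z = nth (ocoef x n) u (first_nz u).
Proof.
have hcoef k : kcoef (ksub (oval x) (kpoly (Poly t))) k%:Z = ocoef x k - nth 0 t k.
  by rewrite ksubE kpolyE coef_Poly.
have hsz : size u = n by rewrite size_tuple.
have hfz : (first_nz u <= n)%N by rewrite -{2}hsz find_size.
split=> [[k|k] hk|].
- have hk' : (k < first_nz u)%N by rewrite -ltz_nat.
  rewrite hcoef -nth_digit_diff; last exact: leq_trans hk' hfz.
  by have := before_find 0 hk'; rewrite -/u => /negbFE /eqP.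
- by rewrite ksubE oval_integral // kpoly_vanish // subr0.
rewrite hcoef; have [hlt|hge] := ltnP (first_nz u) n.
  by rewrite -nth_digit_diff // (set_nth_default 0) // hsz.
have -> : first_nz u = n by apply/eqP; rewrite eqn_leq hfz.
by rewrite nth_default ?size_tuple // subr0 nth_default // hsz.
Qed.

Lemma e_n_lead x n : vanish_lt (e_n n (oval x)) (qsum q n)%:Z /\
  kcoef (e_n n (oval x)) (qsum q n)%:Z = ocoef x n * (-1) ^+ qsum q n.
Proof.
have [h1 h2] := kprod_lead (enum {: n.-tuple F}) (fun t => (factor_lead x t).1).
rewrite /e_n; move: h1 h2.
have -> : \sum_(t <- enum {: n.-tuple F}) (first_nz (digit_diff x t))%:Z = (qsum q n)%:Z.
  rewrite -(sum_first_nz n) (reindex_inj (@digit_diff_inj x n)) big_enum /=.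
  by elim/big_rec2: _ => // t a b _ ->; rewrite PoszD.
move=> h1 ->; split=> //; rewrite -prod_first_nz (reindex_inj (@digit_diff_inj x n)) big_enum.
by apply: eq_bigr => t _; rewrite (factor_lead x t).2.
Qed.

Lemma E_n_lead n x : vanish_lt (E_n n (oval x)) 0 /\ kcoef (E_n n (oval x)) 0 = ocoef x n.
Proof.
case: n => [|n]; first by split; [exact: oval_integral|].
have [f1 f2] := Fpol_lead n.+1; have [e1 e2] := e_n_lead x n.+1.
have hs : (-1) ^+ qsum q n.+1 != 0 :> F by rewrite expf_neq0 // oppr_eq0 oner_eq0.
have hnz : kcoef (kpoly (Fpol F n.+1)) (qsum q n.+1)%:Z != 0 by rewrite f2.
have [i1 i2] := kinv_lead f1 hnz.
have := kmul_vanish e1 i1; have := kmul_coef_lead e1 i1; rewrite addrN => h2 h1.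
by split=> //; rewrite /E_n /kdiv h2 e2 i2 f2 -mulrA mulfV ?mulr1.
Qed.

Lemma E_n_cont n : kcont (fun x : O => E_n n (oval x)).
Proof.
case: n => [|n]; first exact: kcont_oval.
apply: kcont_mul (kcont_const _); apply: kcont_kprod => t.
exact: kcont_sub kcont_oval (kcont_const _).
Qed.

End CarlitzPolynomials.

Section HasseDerivatives.
Context {F : finFieldType}.
Local Notation O := (O F).

Lemma hasse_integral n (x : O) : vanish_lt (hasse n (oval x)) 0.
Proof.
move=> k hk; rewrite /= /hasse_coef; case E: (k + n%:Z) => [i|//].
by rewrite bin_small ?mul0r // -ltz_nat -E; lia.
Qed.

Lemma hasse_digit n (x : O) : kcoef (hasse n (oval x)) 0 = ocoef x n.
Proof. by rewrite /= /hasse_coef add0r binn mul1r. Qed.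

Lemma hasse_cont n : kcont (fun x : O => hasse n (oval x)).
Proof.
move=> x l; have [k hk] := exists_ltz_addn (l + n%:Z) 0.
exists k => y hy i hi; rewrite /= /hasse_coef.
by case E: (i + n%:Z) => [j|//]; rewrite -E hy //; lia.
Qed.

End HasseDerivatives.

Section DigitFamilies.
Context {F : finFieldType}.
Local Notation K := (K F).
Local Notation O := (O F).
Local Notation q := (qq F).

Lemma expf_qq_pow (y : F) m : y ^+ (q ^ m) = y.
Proof. by elim: m => [|m IH]; rewrite ?expr1 // expnS exprM expf_card IH. Qed.

Variable phi : nat -> O -> K.
Hypothesis phi_cont : forall n, kcont (phi n).
Hypothesis phi_integral : forall n x, vanish_lt (phi n x) 0.
Hypothesis phi_digit : forall n x, kcoef (phi n x) 0 = ocoef x n.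

Definition digit_prod (j : nat) (x : O) : K :=
  kprod [seq kexp (phi n x) (digit F j n) | n <- iota 0 (top_digit F j).+1].

Lemma digit_prod_lead j x :
  vanish_lt (digit_prod j x) 0 /\ kcoef (digit_prod j x) 0 = mono j (ocoef x).
Proof.
have hexp n := kexp_integral (digit F j n) (phi_integral n x).
have [h1 h2] := kprod_integral (index_iota 0 (top_digit F j).+1) (fun n => (hexp n).1).
split; [exact: h1 | apply: etrans h2 _; rewrite big_mkord].
by apply: eq_bigr => n _; rewrite (hexp n).2 phi_digit.
Qed.

Theorem digit_family_orthonormal m :
  orthonormal_basis (fun j x => kexp (digit_prod j x) (q ^ m)).
Proof.
apply: orthonormal_basis_of_mono => [j|j x|j x].
- by apply/kcont_kexp/kcont_kprod => n; apply/kcont_kexp.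
- exact: (kexp_integral _ (digit_prod_lead j x).1).1.
have [h1 h2] := digit_prod_lead j x.
by rewrite (kexp_integral _ h1).2 h2 expf_qq_pow.
Qed.

End DigitFamilies.

Theorem corollary5 (F : finFieldType) (m : nat) :
  orthonormal_basis (fun j (x : O F) => kexp (G j x) (qq F ^ m)) /\
  orthonormal_basis (fun j (x : O F) => kexp (D j x) (qq F ^ m)).
Proof.
split.
  exact: digit_family_orthonormal E_n_cont
    (fun n x => (E_n_lead n x).1) (fun n x => (E_n_lead n x).2) m.
exact: digit_family_orthonormal hasse_cont hasse_integral hasse_digit m.
Qed.
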